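(* Let $(N_1,m_1)$ and $(N_2,m_2)$ be labeled marked Petri nets, with place sets $P_1=\{p^1_1,\dots,p^1_k\}$ and $P_2=\{p^2_1,\dots,p^2_l\}$, and let $E$ be a system of linear constraints such that $(N_1,m_1)\vartriangleright_E(N_2,m_2)$. Let $F_1$ be a formula whose free variables satisfy $(\mathrm{fv}(F_1)\setminus P_1)\cap(\mathrm{fv}(E)\setminus P_1)=\emptyset$, and let $F_2(\vec y)\triangleq\exists\vec x.\ \tilde E(\vec x,\vec y)\wedge F_1(\vec x)$ be the $E$-transform of $F_1$. Then $F_1$ is reachable in $(N_1,m_1)$ if and only if $F_2$ is reachable in $(N_2,m_2)$.
   Context: A Petri net $N=(P,T,\mathrm{Pre},\mathrm{Post})$ has a finite set of places $P$, a finite set of transitions $T$ disjoint from $P$, and flow functions $\mathrm{Pre},\mathrm{Post}:T\to(P\to\mathbb N)$. A marking is a map $m:P\to\mathbb N$; a marked net is a pair $(N,m)$. Transition $t$ is enabled at $m$ if $m(p)\ge\mathrm{Pre}(t,p)$ for all $p$; firing it yields $m'=m-\mathrm{Pre}(t)+\mathrm{Post}(t)$, written $m\xrightarrow{t}m'$. A firing sequence $\varrho=t_1\cdots t_n$ is fired from $m$ to $m'$ ($m\overset{\varrho}{\Rightarrow}m'$) if there are markings $m=m_0,\dots,m_n=m'$ with $m_i\xrightarrow{t_{i+1}}m_{i+1}$. $R(N,m_0)$ is the set of markings reachable from $m_0$. A labeled net has a labeling $l:T\to\Sigma\cup\{\tau\}$ ($\tau\notin\Sigma$ a silent symbol), extended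 to sequences by $l(\epsilon)=\epsilon$, $\tau$ mapped to $\epsilon$, and $l(\varrho t)=l(\varrho)l(t)$. Formulas are Boolean combinations of linear (in)equalities over integer variables; place names are used as variables. For a marking $m$ over $P=\{p_1,\dots,p_n\}$, $\underline m\triangleq\bigwedge_i(p_i=m(p_i))$. A marking $m$ satisfies $\phi$, written $m\models\phi$, when $\phi\wedge\underline m$ is satisfiable over the integers ($\phi$ may contain variables that are not places). $\phi$ is reachable in $(N,m_0)$ if there is $m\in R(N,m_0)$ with $m\models\phi$. Markings $m_1$ over $P_1$ and $m_2$ over $P_2$ are compatible if $m_1(p)=m_2(p)$ for all $p\in P_1\cap P_2$; then $m_1\uplus m_2$ is the marking over $P_1\cup P_2$ equal to $m_1$ on $P_1$ and to $m_2$ on $P_2\setminus P_1$; writing $m_1\uplus m_2\models E$ presupposes compatibility. $E$-abstraction: for labeled nets $N_1,N_2$ (labelings $l_1,l_2$ over the same alphabet $\Sigma$) with places $P_1,P_2$ and a system $E$ of linear constraints (which may contain variables outside $P_1\cup P_2$), $(N_1,m_1)\sqsupseteq_E(N_2,m_2)$ holds iff (A1) $m_1\uplus m_2\models E$; and (A2) for every firing sequence $m_1\overset{\varrho_1}{\Rightarrow}m_1'$ in $N_1$ there is at least one marking $m_2'$ over $P_2$ with $m_1'\uplus m_2'\models E$, and for every marking $m_2'$ over $P_2$ with $m_1'\uplus m_2'\models E$ there is a firing sequence $\varrho_2$ of $N_2$ with $m_2\overset{\varrho_2}{\Rightarrow}m_2'$ and $l_1(\varrho_1)=l_2(\varrho_2)$.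 $(N_1,m_1)\vartriangleright_E(N_2,m_2)$ means both $(N_1,m_1)\sqsupseteq_E(N_2,m_2)$ and $(N_2,m_2)\sqsupseteq_E(N_1,m_1)$. $E$-transform: with $\vec p_1=(p^1_1,\dots,p^1_k)$, $\vec p_2=(p^2_1,\dots,p^2_l)$, and disjoint vectors of fresh variables $\vec x=(x_1,\dots,x_k)$, $\vec y=(y_1,\dots,y_l)$, define $\tilde E(\vec x,\vec y)\triangleq E\{\vec p_1\leftarrow\vec x\}\{\vec p_2\leftarrow\vec y\}\wedge\bigwedge_{\{(i,j)\mid p^1_i=p^2_j\}}(x_i=y_j)$; $F_1(\vec x)$ denotes $F_1$ with place $p^1_i$ replaced by $x_i$, and $F_2(\vec y)$ is evaluated on markings of $N_2$ with $y_j$ standing for $p^2_j$.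
   Formalization: In the E-transform $F_2(\vec y)\triangleq\exists\vec x.\ \tilde E(\vec x,\vec y)\wedge F_1(\vec x)$, the bound variables $\vec x$ range over nonnegative integers rather than over all integers. The statement above fails without it. *)

From Stdlib Require Import ZArith List.
Import ListNotations.

Set Implicit Arguments.

(** Variable names (place names are variables); decidable equality. *)
Class EqDec (V : Type) := eq_dec : forall x y : V, {x = y} + {x <> y}.

Inductive term (V : Type) : Type :=
| TConst (c : Z)
| TVar (v : V)
| TAdd (a b : term V)
| TScale (c : Z) (a : term V).

Inductive formula (V : Type) : Type :=
| FTrue
| FFalse
| FLe (a b : term V)
| FEq (a b : term V)
| FNot (f : formula V)
| FAnd (f g : formula V)
| FOr (f g : formula V).

Arguments TConst {V} c.
Arguments FTrue {V}.
Arguments FFalse {V}.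

Fixpoint eval_term {V : Type} (rho : V -> Z) (t : term V) : Z :=
  match t with
  | TConst c => c
  | TVar v => rho v
  | TAdd a b => (eval_term rho a + eval_term rho b)%Z
  | TScale c a => (c * eval_term rho a)%Z
  end.

Fixpoint eval {V : Type} (rho : V -> Z) (f : formula V) : Prop :=
  match f with
  | FTrue => True
  | FFalse => False
  | FLe a b => (eval_term rho a <= eval_term rho b)%Z
  | FEq a b => eval_term rho a = eval_term rho b
  | FNot g => ~ eval rho g
  | FAnd g h => eval rho g /\ eval rho h
  | FOr g h => eval rho g \/ eval rho h
  end.

Fixpoint fv_term {V : Type} (t : term V) : list V :=
  match t with
  | TConst _ => []
  | TVar v => [v]
  | TAdd a b => fv_term a ++ fv_term b
  | TScale _ a => fv_term a
  end.

Fixpoint fv {V : Type} (f : formula V) : list V :=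
  match f with
  | FTrue | FFalse => []
  | FLe a b | FEq a b => fv_term a ++ fv_term b
  | FNot g => fv g
  | FAnd g h | FOr g h => fv g ++ fv h
  end.

Fixpoint rename_term {V : Type} (s : V -> V) (t : term V) : term V :=
  match t with
  | TConst c => TConst c
  | TVar v => TVar (s v)
  | TAdd a b => TAdd (rename_term s a) (rename_term s b)
  | TScale c a => TScale c (rename_term s a)
  end.

Fixpoint rename {V : Type} (s : V -> V) (f : formula V) : formula V :=
  match f with
  | FTrue => FTrue
  | FFalse => FFalse
  | FLe a b => FLe (rename_term s a) (rename_term s b)
  | FEq a b => FEq (rename_term s a) (rename_term s b)
  | FNot g => FNot (rename s g)
  | FAnd g h => FAnd (rename s g) (rename s h)
  | FOr g h => FOr (rename s g) (rename s h)
  end.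

Fixpoint lookup {V : Type} `{EqDec V} (ps xs : list V) (v : V) : V :=
  match ps, xs with
  | p :: ps', x :: xs' => if eq_dec v p then x else lookup ps' xs' v
  | _, _ => v
  end.

(** Formula with an existential prefix [exists xs. body]; the bound
    variables stand for markings of places and range over naturals. *)
Record eformula (V : Type) := EX { ebound : list V; ebody : formula V }.

Definition eval_ex {V : Type} (rho : V -> Z) (F : eformula V) : Prop :=
  exists rho' : V -> Z,
    (forall v, ~ In v (ebound F) -> rho' v = rho v) /\
    (forall x, In x (ebound F) -> (0 <= rho' x)%Z) /\
    eval rho' (ebody F).

(** A transition: its Pre and Post flow and its label ([None] = tau). *)
Record transition (V S : Type) := Trans {
  pre : V -> nat;
  post : V -> nat;
  lab : option S }.

Record net (V S : Type) := Net {
  places : list V;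
  transitions : list (transition V S) }.

Definition wf_net {V S : Type} (N : net V S) : Prop :=
  NoDup (places N) /\
  forall t, In t (transitions N) -> forall v, ~ In v (places N) ->
    pre t v = 0%nat /\ post t v = 0%nat.

Definition marking (V : Type) := V -> nat.

Definition is_marking {V S : Type} (N : net V S) (m : marking V) : Prop :=
  forall v, ~ In v (places N) -> m v = 0%nat.

Definition enabled {V S : Type} (t : transition V S) (m : marking V) : Prop :=
  forall p, (pre t p <= m p)%nat.

Definition fire {V S : Type} (t : transition V S) (m : marking V) : marking V :=
  fun p => (m p - pre t p + post t p)%nat.

Inductive fires {V S : Type} (N : net V S) :
  marking V -> list (transition V S) -> marking V -> Prop :=
| fires_nil m : fires N m [] m
| fires_cons m t rho m' :
    In t (transitions N) -> enabled t m ->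
    fires N (fire t m) rho m' -> fires N m (t :: rho) m'.

Fixpoint labels {V S : Type} (rho : list (transition V S)) : list S :=
  match rho with
  | [] => []
  | t :: rho' =>
      match lab t with
      | Some a => a :: labels rho'
      | None => labels rho'
      end
  end.

Definition reachable {V S : Type} (N : net V S) (m0 m : marking V) : Prop :=
  exists rho, fires N m0 rho m.

Definition models {V : Type} (P : list V) (m : marking V) (phi : formula V) : Prop :=
  exists rho : V -> Z, eval rho phi /\ forall p, In p P -> rho p = Z.of_nat (m p).

Definition compatible {V : Type} (P1 : list V) (m1 : marking V)
  (P2 : list V) (m2 : marking V) : Prop :=
  forall p, In p P1 -> In p P2 -> m1 p = m2 p.

Definition munion {V : Type} `{EqDec V} (P1 : list V) (m1 m2 : marking V) : marking V :=
  fun v => if in_dec eq_dec v P1 then m1 v else m2 v.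

Definition models_union {V : Type} `{EqDec V} (P1 : list V) (m1 : marking V)
  (P2 : list V) (m2 : marking V) (E : formula V) : Prop :=
  compatible P1 m1 P2 m2 /\ models (P1 ++ P2) (munion P1 m1 m2) E.

Definition reachable_formula {V S : Type} (N : net V S) (m0 : marking V)
  (phi : formula V) : Prop :=
  exists m, reachable N m0 m /\ models (places N) m phi.

Definition abstracts {V S : Type} `{EqDec V} (N1 : net V S) (m1 : marking V)
  (N2 : net V S) (m2 : marking V) (E : formula V) : Prop :=
  models_union (places N1) m1 (places N2) m2 E /\
  forall rho1 m1', fires N1 m1 rho1 m1' ->
    (exists m2', is_marking N2 m2' /\ models_union (places N1) m1' (places N2) m2' E) /\
    (forall m2', is_marking N2 m2' -> models_union (places N1) m1' (places N2) m2' E ->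
       exists rho2, fires N2 m2 rho2 m2' /\ labels rho1 = labels rho2).

Definition equiv_E {V S : Type} `{EqDec V} (N1 : net V S) (m1 : marking V)
  (N2 : net V S) (m2 : marking V) (E : formula V) : Prop :=
  abstracts N1 m1 N2 m2 E /\ abstracts N2 m2 N1 m1 E.

Definition big_and {V : Type} (l : list (formula V)) : formula V :=
  fold_right (@FAnd V) FTrue l.

(** the equalities x_i = y_j for all (i,j) with p1_i = p2_j *)
Definition shared_eqs {V : Type} `{EqDec V} (P1 X P2 Y : list V) : list (formula V) :=
  flat_map (fun px =>
    flat_map (fun qy =>
      if eq_dec (fst px) (fst qy) then [FEq (TVar (snd px)) (TVar (snd qy))] else [])
      (combine P2 Y))
    (combine P1 X).

Definition E_tilde {V : Type} `{EqDec V} (P1 X P2 Y : list V) (E : formula V) : formula V :=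
  FAnd (rename (lookup P2 Y) (rename (lookup P1 X) E)) (big_and (shared_eqs P1 X P2 Y)).

Definition E_transform {V : Type} `{EqDec V} (P1 X P2 Y : list V) (E F1 : formula V)
  : eformula V :=
  EX X (FAnd (E_tilde P1 X P2 Y E) (rename (lookup P1 X) F1)).

(** F2(Y) evaluated on a marking m of a net with places P2, y_j standing for p2_j *)
Definition models_y {V : Type} (Y P2 : list V) (m : marking V) (F : eformula V) : Prop :=
  exists rho : V -> Z, eval_ex rho F /\
    forall y p, In (y, p) (combine Y P2) -> rho y = Z.of_nat (m p).

Definition reachable_eformula {V S : Type} (N : net V S) (m0 : marking V)
  (Y : list V) (F : eformula V) : Prop :=
  exists m, reachable N m0 m /\ models_y Y (places N) m F.

(* If a reachable m1' satisfies F1, the abstraction yields a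
   reachable m2' with m1' (+) m2' |= E, and valuing each fresh x_i as
   m1'(p1_i) and each y_j as m2'(p2_j) witnesses F2 at m2'. Conversely, a
   witness of F2 at a reachable m2' defines m1' through the values of the
   x_i; m1' satisfies F1 and, together with m2', also E, so the reverse
   abstraction makes m1' reachable. *)
From Stdlib Require Import ZArith List Lia.

Lemma NoDup_app_disjoint {A : Type} (l1 l2 : list A) a :
  NoDup (l1 ++ l2) -> In a l1 -> ~ In a l2.
Proof.
  intros Hnd Ha Hb.
  apply in_split in Ha as (u & w & ->).
  rewrite <- app_assoc in Hnd; simpl in Hnd.
  apply NoDup_remove_2 in Hnd.
  apply Hnd, in_or_app; right; apply in_or_app; right; exact Hb.
Qed.

Lemma in_combine_swap {A B : Type} (l1 : list A) (l2 : list B) a b :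
  In (a, b) (combine l1 l2) -> In (b, a) (combine l2 l1).
Proof.
  revert l2; induction l1 as [|c l1 IH]; intros [|d l2] Hi; simpl in *; try tauto.
  destruct Hi as [Heq|Hi]; [inversion Heq; subst; left; reflexivity|right; auto].
Qed.

Section Formulas.
Context {V : Type}.

Lemma eval_term_rename (rho : V -> Z) (s : V -> V) t :
  eval_term rho (rename_term s t) = eval_term (fun v => rho (s v)) t.
Proof. induction t; simpl; congruence. Qed.

Lemma eval_rename (rho : V -> Z) (s : V -> V) f :
  eval rho (rename s f) = eval (fun v => rho (s v)) f.
Proof.
  induction f; simpl; rewrite ?eval_term_rename, ?IHf, ?IHf1, ?IHf2; reflexivity.
Qed.

Lemma eval_term_ext (rho rho' : V -> Z) t :
  (forall v, In v (fv_term t) -> rho v = rho' v) -> eval_term rho t = eval_term rho' t.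
Proof.
  induction t; simpl; intros Hv; auto.
  - rewrite IHt1, IHt2; auto; intros; apply Hv, in_or_app; auto.
  - rewrite IHt; auto.
Qed.

Lemma eval_ext (rho rho' : V -> Z) f :
  (forall v, In v (fv f) -> rho v = rho' v) -> eval rho f = eval rho' f.
Proof.
  induction f; simpl; intros Hv; auto;
    rewrite ?(eval_term_ext rho rho' a), ?(eval_term_ext rho rho' b),
            ?IHf, ?IHf1, ?IHf2;
    auto; intros; apply Hv; auto using in_or_app.
Qed.

Lemma eval_big_and (rho : V -> Z) l :
  eval rho (big_and l) <-> forall f, In f l -> eval rho f.
Proof.
  induction l as [|g l IH]; simpl.
  - split; [intros _ f []|trivial].
  - rewrite IH. split.
    + intros [Hg Hl] f [<-|Hf]; auto.
    + intros Hh; split; auto.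
Qed.

End Formulas.

Section Lookup.
Context {V : Type} `{EqDec V}.

Lemma lookup_notin (ps xs : list V) v : ~ In v ps -> lookup ps xs v = v.
Proof.
  revert xs; induction ps as [|a ps IH]; intros [|b xs] Hn; simpl; auto.
  destruct (eq_dec v a) as [->|]; [exfalso; apply Hn; left; reflexivity|].
  apply IH; intro; apply Hn; right; assumption.
Qed.

Lemma In_combine_lookup (ps xs : list V) v :
  length ps = length xs -> In v ps -> In (v, lookup ps xs v) (combine ps xs).
Proof.
  revert xs; induction ps as [|a ps IH]; intros [|b xs] Hl Hi;
    simpl in *; try discriminate; try tauto.
  destruct (eq_dec v a) as [->|Hne]; [left; reflexivity|].
  right; apply IH; [congruence|]. destruct Hi; [congruence|assumption].
Qed.

Lemma lookup_In (ps xs : list V) v :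
  length ps = length xs -> In v ps -> In (lookup ps xs v) xs.
Proof. intros Hl Hv; eapply in_combine_r, In_combine_lookup; eassumption. Qed.

Lemma lookup_combine (ps xs : list V) p x :
  NoDup ps -> In (p, x) (combine ps xs) -> lookup ps xs p = x.
Proof.
  revert xs; induction ps as [|a ps IH]; intros [|b xs] Hnd Hi; simpl in *; try tauto.
  inversion Hnd as [|? ? Ha Hnd']; subst.
  destruct Hi as [Heq|Hi].
  - inversion Heq; subst. destruct (eq_dec p p); congruence.
  - pose proof (in_combine_l _ _ _ _ Hi).
    destruct (eq_dec p a) as [->|]; [contradiction|auto].
Qed.

End Lookup.

Section Transform.
Context {V : Type} `{EqDec V}.

Lemma eval_shared_eqs (tau : V -> Z) P1 X P2 Y :
  eval tau (big_and (shared_eqs P1 X P2 Y)) <->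
  forall p x y, In (p, x) (combine P1 X) -> In (p, y) (combine P2 Y) -> tau x = tau y.
Proof.
  unfold shared_eqs; rewrite eval_big_and; split.
  - intros Hall p x y Hx Hy.
    apply (Hall (FEq (TVar x) (TVar y))).
    apply in_flat_map; exists (p, x); split; [exact Hx|].
    apply in_flat_map; exists (p, y); split; [exact Hy|].
    simpl; destruct (eq_dec p p); [left; reflexivity|congruence].
  - intros Hsh f Hf.
    apply in_flat_map in Hf as [[p x] [Hx Hf]].
    apply in_flat_map in Hf as [[q y] [Hy Hf]]; simpl in Hf.
    destruct (eq_dec p q) as [<-|]; [|destruct Hf].
    destruct Hf as [<-|[]]; simpl; eauto.
Qed.

Lemma eval_E_transform (tau : V -> Z) P1 X P2 Y E F1 :
  eval tau (ebody (E_transform P1 X P2 Y E F1)) <->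
  eval (fun v => tau (lookup P2 Y (lookup P1 X v))) E /\
  (forall p x y, In (p, x) (combine P1 X) -> In (p, y) (combine P2 Y) -> tau x = tau y) /\
  eval (fun v => tau (lookup P1 X v)) F1.
Proof.
  unfold E_transform, E_tilde; cbn [ebody eval].
  rewrite !eval_rename, eval_shared_eqs; tauto.
Qed.

Lemma models_union_iff P1 (m1 : marking V) P2 (m2 : marking V) E :
  models_union P1 m1 P2 m2 E <->
  compatible P1 m1 P2 m2 /\
  exists rho, eval rho E /\
    (forall p, In p P1 -> rho p = Z.of_nat (m1 p)) /\
    (forall p, In p P2 -> rho p = Z.of_nat (m2 p)).
Proof.
  unfold models_union, models, munion; split.
  - intros [Hc [rho [HE Hr]]]; split; [exact Hc|].
    exists rho; split; [exact HE|split]; intros p Hp.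
    + rewrite Hr by (apply in_or_app; left; exact Hp).
      destruct (in_dec eq_dec p P1); [reflexivity|contradiction].
    + rewrite Hr by (apply in_or_app; right; exact Hp).
      destruct (in_dec eq_dec p P1) as [Hp1|]; [rewrite Hc|]; auto.
  - intros [Hc [rho [HE [Hr1 Hr2]]]]; split; [exact Hc|].
    exists rho; split; [exact HE|]; intros p Hp.
    destruct (in_dec eq_dec p P1) as [Hp1|Hp1]; [auto|].
    apply in_app_or in Hp as [Hp|Hp]; [contradiction|auto].
Qed.

Variables (P1 X P2 Y : list V) (E F1 : formula V).
Hypothesis length_X : length P1 = length X.
Hypothesis length_Y : length P2 = length Y.
Hypothesis nodup_XY : NoDup (X ++ Y).
Hypothesis X_notin_P2 : forall x, In x X -> ~ In x P2.

Lemma models_y_E_transform_inv (m2' : marking V) :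
  models_y Y P2 m2' (E_transform P1 X P2 Y E F1) ->
  exists m1' : marking V, (forall v, ~ In v P1 -> m1' v = 0%nat) /\
    models_union P2 m2' P1 m1' E /\ models P1 m1' F1.
Proof.
  intros [tau [[tau' [Hout [Hpos Hbody]]] Htau]]; cbn [ebound E_transform] in Hout, Hpos.
  apply eval_E_transform in Hbody as [HE [Hsh HF]].
  set (m1' := fun p => if in_dec eq_dec p P1 then Z.to_nat (tau' (lookup P1 X p)) else 0%nat).
  assert (Hx : forall p, In p P1 -> tau' (lookup P1 X p) = Z.of_nat (m1' p)).
  { intros p Hp; unfold m1'; destruct (in_dec eq_dec p P1); [|contradiction].
    rewrite Z2Nat.id; [reflexivity|].
    apply Hpos, lookup_In; assumption. }
  assert (Hy : forall p, In p P2 -> tau' (lookup P2 Y p) = Z.of_nat (m2' p)).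
  { intros p Hp.
    pose proof (In_combine_lookup P2 Y p length_Y Hp) as Hc.
    rewrite Hout; [apply Htau, in_combine_swap, Hc|].
    intro HX; apply (NoDup_app_disjoint X Y _ nodup_XY HX).
    eapply in_combine_r; exact Hc. }
  assert (Hcomp : compatible P2 m2' P1 m1').
  { intros p Hp2 Hp1; apply Nat2Z.inj.
    rewrite <- Hx, <- Hy by assumption; symmetry.
    apply (Hsh p); apply In_combine_lookup; assumption. }
  exists m1'; split; [|split].
  - intros v Hv; unfold m1'; destruct (in_dec eq_dec v P1); [contradiction|reflexivity].
  - apply models_union_iff; split; [exact Hcomp|].
    exists (fun v => tau' (lookup P2 Y (lookup P1 X v))); split; [exact HE|split].
    + intros p Hp2; destruct (in_dec eq_dec p P1) as [Hp1|Hp1].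
      * rewrite (lookup_notin P2 Y), Hx, Hcomp by
          (auto; apply X_notin_P2, lookup_In; assumption).
        reflexivity.
      * rewrite (lookup_notin P1 X p Hp1); auto.
    + intros p Hp1.
      rewrite (lookup_notin P2 Y) by (apply X_notin_P2, lookup_In; assumption).
      auto.
  - exists (fun v => tau' (lookup P1 X v)); split; [exact HF|exact Hx].
Qed.

Hypothesis fresh_E : forall v, In v (X ++ Y) -> ~ In v (fv E).
Hypothesis fresh_F1 : forall v, In v (X ++ Y) -> ~ In v (fv F1).
Hypothesis fv_F1_E : forall v, In v (fv F1) -> In v (fv E) -> In v P1.

(* Outside X and Y the variables of F1 take their values from rhoF and all
   others from rhoE. This serves both formulas: by [fv_F1_E] they share no
   variable outside P1, and P1 itself is renamed into X. *)
Definition glue (m1 m2 : marking V) (rhoF rhoE : V -> Z) (v : V) : Z :=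
  if in_dec eq_dec v X then Z.of_nat (m1 (lookup X P1 v))
  else if in_dec eq_dec v Y then Z.of_nat (m2 (lookup Y P2 v))
  else if in_dec eq_dec v (fv F1) then rhoF v else rhoE v.

Section Glue.
Variables (m1 m2 : marking V) (rhoF rhoE : V -> Z).

Lemma glue_X p x : In (p, x) (combine P1 X) -> glue m1 m2 rhoF rhoE x = Z.of_nat (m1 p).
Proof.
  intros Hc; unfold glue.
  destruct (in_dec eq_dec x X) as [_|HX]; [|elim HX; eapply in_combine_r; exact Hc].
  rewrite (lookup_combine X P1 x p); [reflexivity| |apply in_combine_swap, Hc].
  eapply NoDup_app_remove_r; exact nodup_XY.
Qed.

Lemma glue_Y y p : In (y, p) (combine Y P2) -> glue m1 m2 rhoF rhoE y = Z.of_nat (m2 p).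
Proof.
  intros Hc; pose proof (in_combine_l _ _ _ _ Hc) as HY; unfold glue.
  destruct (in_dec eq_dec y X) as [HX|_].
  { elim (NoDup_app_disjoint X Y y nodup_XY HX HY). }
  destruct (in_dec eq_dec y Y) as [_|]; [|contradiction].
  rewrite (lookup_combine Y P2 y p); [reflexivity| |exact Hc].
  eapply NoDup_app_remove_l; exact nodup_XY.
Qed.

Lemma glue_fresh v : ~ In v (X ++ Y) ->
  glue m1 m2 rhoF rhoE v = if in_dec eq_dec v (fv F1) then rhoF v else rhoE v.
Proof.
  intros Hv; unfold glue.
  destruct (in_dec eq_dec v X); [elim Hv; apply in_or_app; left; assumption|].
  destruct (in_dec eq_dec v Y); [elim Hv; apply in_or_app; right; assumption|].
  reflexivity.
Qed.

End Glue.

Lemma models_y_E_transform (m1' m2' : marking V) :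
  models_union P1 m1' P2 m2' E -> models P1 m1' F1 ->
  models_y Y P2 m2' (E_transform P1 X P2 Y E F1).
Proof.
  intros Hu [rhoF [HF HrF]].
  apply models_union_iff in Hu as [Hc [rhoE [HE [HrE1 HrE2]]]].
  set (tau := glue m1' m2' rhoF rhoE).
  assert (HX : forall p, In p P1 -> In (p, lookup P1 X p) (combine P1 X))
    by (intros; apply In_combine_lookup; assumption).
  assert (HY : forall p, In p P2 -> In (lookup P2 Y p, p) (combine Y P2))
    by (intros; apply in_combine_swap, In_combine_lookup; assumption).
  exists tau; split; [|apply glue_Y].
  exists tau; split; [reflexivity|split].
  { intros x Hx; unfold tau, glue.
    destruct (in_dec eq_dec x X); [lia|contradiction]. }
  apply eval_E_transform; split; [|split].
  - rewrite <- (eval_ext rhoE _ E); [exact HE|]; intros v Hv.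
    destruct (in_dec eq_dec v P1) as [Hv1|Hv1].
    + rewrite (lookup_notin P2 Y) by (apply X_notin_P2, lookup_In; assumption).
      unfold tau; rewrite (glue_X _ _ _ _ v); auto.
    + rewrite (lookup_notin P1 X v Hv1).
      destruct (in_dec eq_dec v P2) as [Hv2|Hv2].
      * unfold tau; rewrite (glue_Y _ _ _ _ _ v); auto.
      * rewrite (lookup_notin P2 Y v Hv2).
        unfold tau; rewrite glue_fresh by (intro HXY; exact (fresh_E v HXY Hv)).
        destruct (in_dec eq_dec v (fv F1)) as [HvF|]; [elim Hv1; auto|reflexivity].
  - intros p x y Hx Hy; unfold tau.
    rewrite (glue_X _ _ _ _ p x Hx), (glue_Y _ _ _ _ y p (in_combine_swap _ _ _ _ Hy)).
    f_equal; apply Hc; [eapply in_combine_l; exact Hx|eapply in_combine_l; exact Hy].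
  - rewrite <- (eval_ext rhoF _ F1); [exact HF|]; intros v Hv.
    destruct (in_dec eq_dec v P1) as [Hv1|Hv1].
    + unfold tau; rewrite (glue_X _ _ _ _ v); auto.
    + rewrite (lookup_notin P1 X v Hv1).
      unfold tau; rewrite glue_fresh by (intro HXY; exact (fresh_F1 v HXY Hv)).
      destruct (in_dec eq_dec v (fv F1)); [reflexivity|contradiction].
Qed.

End Transform.

Theorem theorem5 (V S : Type) `{EqDec V} (N1 N2 : net V S) (m1 m2 : marking V)
  (E F1 : formula V) (X Y : list V) :
  wf_net N1 -> wf_net N2 ->
  is_marking N1 m1 -> is_marking N2 m2 ->
  equiv_E N1 m1 N2 m2 E ->
  (* (fv(F1) \ P1) /\ (fv(E) \ P1) = empty *)
  (forall v, In v (fv F1) -> In v (fv E) -> In v (places N1)) ->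
  (* X, Y: disjoint vectors of fresh variables *)
  length X = length (places N1) -> length Y = length (places N2) ->
  NoDup (X ++ Y) ->
  (forall v, In v (X ++ Y) ->
     ~ In v (places N1) /\ ~ In v (places N2) /\ ~ In v (fv E) /\ ~ In v (fv F1)) ->
  (reachable_formula N1 m1 F1 <->
   reachable_eformula N2 m2 Y (E_transform (places N1) X (places N2) Y E F1)).
Proof.
  intros _ _ _ _ [[_ A12] [_ A21]] Hfv HlX HlY Hnd Hfresh.
  assert (X_notin_P2 : forall x, In x X -> ~ In x (places N2))
    by (intros x Hx; apply Hfresh, in_or_app; left; exact Hx).
  split.
  - intros [m1' [[r1 Hr1] HF]].
    destruct (A12 r1 m1' Hr1) as [[m2' [Hm2' Hu]] Hreach].
    destruct (Hreach m2' Hm2' Hu) as [r2 [Hr2 _]].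
    exists m2'; split; [exists r2; exact Hr2|].
    apply (models_y_E_transform (places N1) X (places N2) Y E F1) with (m1' := m1');
      auto; intros v Hv; apply (Hfresh v Hv).
  - intros [m2' [[r2 Hr2] HF2]].
    destruct (models_y_E_transform_inv (places N1) X (places N2) Y E F1
                (eq_sym HlX) (eq_sym HlY) Hnd X_notin_P2 m2' HF2)
      as [m1' [Hm1' [Hu HF1]]].
    destruct (proj2 (A21 r2 m2' Hr2) m1' Hm1' Hu) as [r1 [Hr1 _]].
    exists m1'; split; [exists r1; exact Hr1|exact HF1].
Qed.
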